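(* Let $X\subseteq[\omega]^\omega$ be closed such that $|x\cap y|=\omega$ for all $x,y\in X$. Then $X$ is $\sigma$-compact.
   Context: $[\omega]^\omega$ is the set of infinite subsets of $\omega$, topologized as a subspace of $\mathcal{P}(\omega)\cong 2^\omega$ (equivalently, by identifying each infinite set with its increasing enumeration, as a subspace of $\omega^\omega$). *)

From HB Require Import structures.
From mathcomp Require Import all_boot all_order all_algebra.
From mathcomp Require Import all_classical all_reals topology cantor.
Set Implicit Arguments. Unset Strict Implicit. Unset Printing Implicit Defensive.
Local Open Scope classical_set_scope.

(* P(omega) is identified with cantor_space = nat -> bool with the product
   topology (x n = true iff n is in the set). *)

Definition infinite_subset (x : cantor_space) : Prop :=
  forall n : nat, exists m : nat, (n <= m)%N /\ x m = true.

Definition omega_omega : set cantor_space := [set x | infinite_subset x].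

Definition setI_nat (x y : cantor_space) : cantor_space := fun n => x n && y n.

Definition closed_in_omega_omega (X : set cantor_space) : Prop :=
  X `<=` omega_omega /\ exists C : set cantor_space, closed C /\ X = C `&` omega_omega.

Definition sigma_compact (T : topologicalType) (X : set T) : Prop :=
  exists K : nat -> set T, (forall n, compact (K n)) /\ X = \bigcup_n K n.

(* Write [s] for the cylinder of a finite 0-1 sequence s and call s bad when
   X ∩ [s] is not sigma-compact.  Suppose that below a bad s every bad t comes
   with a bound b(t) such that every bad extension of t adding new elements
   adds one below b(t).  Then X ∩ [s] is covered by the countably many
   sigma-compact X ∩ [t] with t good, together with the points of C ∩ [s]
   meeting every window [m, max_{|t| = m} b(t)); the latter form a compact set
   of infinite sets, so s would not be bad.  Hence some bad extension of s is
   jumpy: its bad extensions can put their next element arbitrarily far out.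
   Extending two branches alternately from a jumpy node, each beyond the
   current length of the other, yields two points of X with finite
   intersection. *)

From HB Require Import structures.
From mathcomp Require Import all_boot all_order all_algebra.
From mathcomp Require Import all_classical all_reals topology cantor.

Set Implicit Arguments.
Unset Strict Implicit.
Unset Printing Implicit Defensive.

Local Open Scope classical_set_scope.

Section SigmaCompact.
Variable T : topologicalType.

Lemma sigma_compact_compact (A : set T) : compact A -> sigma_compact A.
Proof. by move=> cA; exists (fun=> A); split=> //; rewrite bigcup_const. Qed.

Lemma sigma_compact_bigcup (I : countType) (P : set I) (A : I -> set T) :
  (forall i, P i -> sigma_compact (A i)) ->
  sigma_compact (\bigcup_(i in P) A i).
Proof.
move=> scA; rewrite bigcup_mkcond.
have /choice[K KP] : forall i, exists K : nat -> set T,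
    (forall n, compact (K n)) /\
    (if i \in P then A i else set0) = \bigcup_n K n.
  move=> i; case: ifPn => [/set_mem/scA//|_].
  by exists (fun=> set0); split=> [_|]; [exact: compact0|rewrite bigcup0].
exists (fun n => if unpickle n is Some (i, j) then K i j else set0); split.
  move=> n; case: (unpickle n) => [[i j]|]; last exact: compact0.
  exact: (KP i).1.
apply/seteqP; split=> [x [i _]|x [n _]].
  by rewrite (KP i).2 => -[j _ Kijx]; exists (pickle (i, j)); rewrite ?pickleK.
case: (unpickle n) => [[i j] Kijx|//].
by exists i => //; rewrite (KP i).2; exists j.
Qed.

Lemma sigma_compact_setU (A B : set T) :
  sigma_compact A -> sigma_compact B -> sigma_compact (A `|` B).
Proof.
move=> scA scB; rewrite -bigcup2E.
apply: sigma_compact_bigcup => -[|[|n]] _ //=.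
exact/sigma_compact_compact/compact0.
Qed.

End SigmaCompact.

Lemma compact_nested_closed (T : topologicalType) (D : nat -> set T) :
  compact [set: T] -> (forall n, closed (D n)) -> (forall n, D n !=set0) ->
  (forall n, D n.+1 `<=` D n) -> exists p, forall n, D n p.
Proof.
move=> cT clD D0 Dsub.
have /choice[d Dd] : forall n, exists x, D n x.
  by move=> n; have [x] := D0 n; exists x.
have Dle : {homo D : m n / (m <= n)%N >-> n `<=` m}.
  apply: homo_leq => [E //|E F G FE GF|//]; exact: subset_trans GF FE.
have [|p [_ clp]] := cT (d @ \oo) _ _; first exact: filterT.
exists p => n; apply: clD; move: clp; rewrite clusterE; apply.
by exists n => // k /= nk; apply: Dle nk _ (Dd k).
Qed.
Lemma nth_prefix (T : eqType) (x0 : T) (s t : seq T) i :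
  prefix s t -> (i < size s)%N -> nth x0 t i = nth x0 s i.
Proof. by case/prefixP=> u -> si; rewrite nth_cat si. Qed.

Lemma nth_false_size (s : seq bool) i : nth false s i -> (i < size s)%N.
Proof. by apply: contraTT; rewrite -leqNgt => /(nth_default false) ->. Qed.

Lemma closed_coordinate i (b : bool) : closed [set y : cantor_space | y i = b].
Proof.
have -> : [set y : cantor_space | y i = b] = proj i @^-1` [set b] by [].
apply: preimage_closed; last exact: discrete_closed.
by move=> y _; apply: proj_continuous.
Qed.

Definition cylinder (s : seq bool) : set cantor_space :=
  [set y | forall i, (i < size s)%N -> y i = nth false s i].

Lemma cylinder_nil : cylinder [::] = setT.
Proof. by rewrite -subTset. Qed.

Lemma cylinder_prefix s t : prefix s t -> cylinder t `<=` cylinder s.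
Proof.
move=> st y yt i si; rewrite -(nth_prefix false st si) yt //.
exact: leq_trans si (size_prefix st).
Qed.

Lemma cylinder_mkseq (y : cantor_space) m : cylinder (mkseq y m) y.
Proof. by move=> i; rewrite size_mkseq => im; rewrite nth_mkseq. Qed.

Lemma prefix_mkseq s (y : cantor_space) m :
  cylinder s y -> (size s <= m)%N -> prefix s (mkseq y m).
Proof.
move=> ys sm; rewrite prefixE; apply/eqP/(@eq_from_nth _ false).
  by rewrite size_takel // size_mkseq.
move=> i; rewrite size_takel ?size_mkseq // => si.
by rewrite nth_take // nth_mkseq ?ys // (leq_trans si).
Qed.

Lemma closed_cylinder s : closed (cylinder s).
Proof.
have -> : cylinder s = \bigcap_(i in [set i | (i < size s)%N])
    [set y | y i = nth false s i] by [].
by apply: closed_bigI => i _; apply: closed_coordinate.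
Qed.

Lemma closed_has_true_between m h :
  closed [set y : cantor_space | exists2 i, (m <= i < h)%N & y i].
Proof.
have -> : [set y : cantor_space | exists2 i, (m <= i < h)%N & y i] =
    \bigcup_(i in [set i | (m <= i < h)%N]) [set y | y i = true] by [].
apply: closed_bigcup => [|i _]; last exact: closed_coordinate.
by apply: sub_finite_set (finite_II h) => i /andP[].
Qed.

Definition new_true (s t : seq bool) i := (size s <= i)%N && nth false t i.

Definition jumps (s t : seq bool) b :=
  [/\ prefix s t, exists i, new_true s t i &
      forall i, new_true s t i -> (b <= i)%N].

Lemma jumps_size s t b : jumps s t b -> (b < size t)%N.
Proof.
case=> _ [i new_i] /(_ i new_i) bi; case/andP: new_i => _ /nth_false_size.
exact: leq_ltn_trans bi.
Qed.

Lemma jumpsW s t b b' : (b' <= b)%N -> jumps s t b -> jumps s t b'.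
Proof. by move=> b'b [st new_t ge_b]; split=> // i /ge_b; apply: leq_trans. Qed.

Lemma jumps_prefix s u t b : jumps s u b -> prefix u t -> jumps s t b.
Proof.
move=> /[dup] /jumps_size bu [su [i new_i] ge_b] ut.
have new_ut j : (j < size u)%N -> new_true s t j = new_true s u j.
  by move=> ju; rewrite /new_true (nth_prefix false ut ju).
split; first exact: prefix_trans su ut.
  by exists i; rewrite new_ut // (nth_false_size (proj2 (andP new_i))).
move=> j; case: (ltnP j (size u)) => [ju|uj _].
  by rewrite new_ut // => /ge_b.
exact: ltnW (leq_trans bu uj).
Qed.

Definition disjoint_beyond r (p q : seq bool) :=
  forall i, (r <= i)%N -> ~~ (nth false p i && nth false q i).

Lemma disjoint_beyondC r p q : disjoint_beyond r p q -> disjoint_beyond r q p.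
Proof. by move=> pq i /pq; rewrite andbC. Qed.

Lemma disjoint_beyond_jumps r s s' t :
  disjoint_beyond r s t -> jumps s s' (size t) -> disjoint_beyond r s' t.
Proof.
move=> st [ss' _ ge_t] i ri; apply/negP => /andP[s'i ti].
case: (ltnP i (size s)) => [i_s|si].
  by have := st i ri; rewrite -(nth_prefix false ss' i_s) s'i ti.
have := ge_t i; rewrite /new_true si s'i => /(_ isT).
by rewrite leqNgt (nth_false_size ti).
Qed.

(* Under [forall n, jumps (c n) (c n.+1) n] the sequence [c i.+1] is longer
   than [i], so its [i]-th entry is the [i]-th entry of the limit. *)
Definition chain_limit (c : nat -> seq bool) : cantor_space :=
  fun i => nth false (c i.+1) i.

Lemma chain_limit_cylinder c :
  (forall n, jumps (c n) (c n.+1) n) ->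
  forall n, cylinder (c n) (chain_limit c).
Proof.
move=> cj; have c_le : {homo c : m n / (m <= n)%N >-> prefix m n}.
  apply: homo_leq => [s|s t u|n]; [exact: prefix_refl|exact: prefix_trans|].
  by case: (cj n).
move=> n i ni; have i_lt : (i < size (c i.+1))%N := jumps_size (cj i).
rewrite -(nth_prefix false (c_le n (maxn n i.+1) (leq_maxl _ _)) ni).
by rewrite /chain_limit (nth_prefix false (c_le _ _ (leq_maxr _ _)) i_lt).
Qed.

Section ClosedFamily.
Variable C : set cantor_space.
Hypothesis closedC : closed C.
Local Notation X := (C `&` omega_omega).

Definition bad s := ~ sigma_compact (X `&` cylinder s).

Definition jumpy s := bad s /\ forall b, exists2 t, bad t & jumps s t b.

Lemma bad_nonempty s : bad s -> X `&` cylinder s !=set0.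
Proof.
move=> sbad; apply/set0P/negP => /eqP E; apply: sbad; rewrite E.
exact/sigma_compact_compact/compact0.
Qed.

Lemma chain_limit_mem c : (forall n, bad (c n)) ->
  (forall n, jumps (c n) (c n.+1) n) -> X (chain_limit c).
Proof.
move=> cbad cj; have climit := chain_limit_cylinder cj; split.
  have [|||p Cp] := @compact_nested_closed _ (fun n => C `&` cylinder (c n))
      cantor_space_compact.
  - by move=> n; apply: closedI => //; exact: closed_cylinder.
  - by move=> n; have [y [[Cy _] cy]] := bad_nonempty (cbad n); exists y.
  - by move=> n y [Cy cy]; split=> //; apply: cylinder_prefix cy; case: (cj n).
  have -> : chain_limit c = p.
    apply/funext => i; have [_ -> //] := Cp i.+1; exact: jumps_size (cj i).
  by have [] := Cp 0.
move=> n; have [_ [i new_i] ge_n] := cj n; exists i; split; first exact: ge_n.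
by case/andP: new_i => _ ci; rewrite (climit n.+1 i (nth_false_size ci)).
Qed.

Definition max_bound (bound : seq bool -> nat) m :=
  (\max_(t : m.-tuple bool) bound t)%N.

Lemma bounded_jumps_true_in_window s bound y m :
  (forall t, prefix s t -> bad t -> forall u, bad u -> ~ jumps t u (bound t)) ->
  X y -> cylinder s y -> (forall t, prefix s t -> cylinder t y -> bad t) ->
  (size s <= m)%N -> exists2 i, (m <= i < max_bound bound m)%N & y i.
Proof.
move=> nojump [_ yinf] ys ybad sm.
have st : prefix s (mkseq y m) := prefix_mkseq ys sm.
have [k [mk yk]] := yinf m.
have tu : prefix (mkseq y m) (mkseq y k.+1).
  by apply: prefix_mkseq (@cylinder_mkseq y m) _; rewrite size_mkseq leqW.
have [i new_i lt_i] : exists2 i, new_true (mkseq y m) (mkseq y k.+1) i &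
    (i < bound (mkseq y m))%N.
  apply: contrapT => noi; apply: (nojump _ st (ybad _ st (@cylinder_mkseq y m))
    _ (ybad _ (prefix_trans st tu) (@cylinder_mkseq y _))).
  split=> // [|j new_j].
    by exists k; rewrite /new_true size_mkseq mk nth_mkseq.
  by rewrite leqNgt; apply/negP => jb; apply: noi; exists j.
case/andP: new_i; rewrite size_mkseq => mi ui.
have ik : (i < k.+1)%N by rewrite -(size_mkseq y k.+1) (nth_false_size ui).
exists i; last by rewrite nth_mkseq in ui.
rewrite mi (leq_trans lt_i) //.
have := leq_bigmax (F := bound \o val) (in_tuple (mkseq y m)).
by rewrite /= size_mkseq.
Qed.

Lemma bounded_jumps_not_bad s bound :
  (forall t, prefix s t -> bad t -> forall u, bad u -> ~ jumps t u (bound t)) ->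
  ~ bad s.
Proof.
(* [K] is compact and, meeting every window [m, max_bound bound m), consists
   of infinite sets. *)
move=> nojump; apply; pose K := C `&` cylinder s `&`
  \bigcap_(m in [set m | (size s <= m)%N])
    [set y | exists2 i, (m <= i < max_bound bound m)%N & y i].
have -> : X `&` cylinder s =
    K `|` \bigcup_(t in [set t | prefix s t /\ ~ bad t]) (X `&` cylinder t).
  apply/seteqP; split=> y.
    move=> [Xy ys]; have [[t [st tgood] yt]|none] :=
      pselect (exists2 t, prefix s t /\ ~ bad t & cylinder t y).
      by right; exists t.
    left; split; first by split=> //; case: Xy.
    move=> m /= sm; apply: (bounded_jumps_true_in_window nojump Xy ys _ sm).
    by move=> t st yt; apply: contrapT => tgood; apply: none; exists t.
  case=> [[[Cy ys] Ky]|[t [st _] [Xy yt]]]; last first.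
    by split=> //; apply: cylinder_prefix yt.
  split=> //; split=> // n.
  have [i /andP[ni _] yi] := Ky (maxn n (size s)) (leq_maxr _ _).
  by exists i; split=> //; apply: leq_trans ni; apply: leq_maxl.
apply: sigma_compact_setU.
  apply/sigma_compact_compact/(subclosed_compact _ cantor_space_compact) => //.
  apply: closedI; first by apply: closedI => //; exact: closed_cylinder.
  by apply: closed_bigI => m _; apply: closed_has_true_between.
by apply: sigma_compact_bigcup => t [_]; apply: contrapT.
Qed.

Lemma bad_has_jumpy_extension s : bad s -> exists2 t, prefix s t & jumpy t.
Proof.
move=> sbad; apply: contrapT => nojumpy.
have /choice[bound nojump] : forall t, exists b,
    prefix s t -> bad t -> forall u, bad u -> ~ jumps t u b.
  move=> t; have [st|] := pselect (prefix s t); last by exists 0.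
  have [tbad|] := pselect (bad t); last by exists 0.
  have /existsNP[b nob] : ~ forall b, exists2 u, bad u & jumps t u b.
    by move=> tj; apply: nojumpy; exists t.
  by exists b => _ _ u ubad tu; apply: nob; exists u.
exact: bounded_jumps_not_bad nojump sbad.
Qed.

Lemma jumpy_jumps s b : jumpy s -> exists2 t, jumpy t & jumps s t b.
Proof.
case=> _ /(_ b)[u ubad su]; have [t ut tj] := bad_has_jumpy_extension ubad.
by exists t => //; apply: jumps_prefix su ut.
Qed.

(* Each step extends one branch past the current length of the other, so the
   two branches never share an element at or beyond [size rho]. *)
Section Fusion.
Variable ext : seq bool -> nat -> seq bool.
Hypothesis ext_jumps :
  forall s b, jumpy s -> jumpy (ext s b) /\ jumps s (ext s b) b.
Variable rho : seq bool.
Hypothesis jumpy_rho : jumpy rho.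

Definition fusion_step (p : seq bool * seq bool) :=
  let s := ext p.1 (size p.2) in (s, ext p.2 (size s)).

Definition fusion n := iter n fusion_step (rho, rho).

Lemma fusion_invariant n : [/\ jumpy (fusion n).1, jumpy (fusion n).2,
  (n <= size (fusion n).2)%N &
  disjoint_beyond (size rho) (fusion n).1 (fusion n).2].
Proof.
elim: n => [|n [j1 j2 n2 D]]; first by split=> // i ri; rewrite /= nth_default.
rewrite /fusion iterS -/(fusion n) /=.
have [js jumps_s] := ext_jumps (size (fusion n).2) j1.
set s := ext (fusion n).1 _ in js jumps_s *.
have [jt jumps_t] := ext_jumps (size s) j2.
split=> //.
  exact: leq_ltn_trans n2 (ltn_trans (jumps_size jumps_s) (jumps_size jumps_t)).
apply/disjoint_beyondC/(disjoint_beyond_jumps _ jumps_t)/disjoint_beyondC.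
exact: disjoint_beyond_jumps D jumps_s.
Qed.

Lemma fusion_jumps n :
  jumps (fusion n).1 (fusion n.+1).1 n /\ jumps (fusion n).2 (fusion n.+1).2 n.
Proof.
have [j1 j2 n2 _] := fusion_invariant n.
rewrite /fusion iterS -/(fusion n) /=.
have [_ jumps_s] := ext_jumps (size (fusion n).2) j1.
set s := ext (fusion n).1 _ in jumps_s *.
have [_ jumps_t] := ext_jumps (size s) j2.
split; first exact: jumpsW n2 jumps_s.
exact: jumpsW (ltnW (leq_ltn_trans n2 (jumps_size jumps_s))) jumps_t.
Qed.

Lemma fusion_limits : exists y1 y2,
  [/\ X y1, X y2 & forall i, (size rho <= i)%N -> ~~ (y1 i && y2 i)].
Proof.
exists (chain_limit (fun n => (fusion n).1)).
exists (chain_limit (fun n => (fusion n).2)).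
split=> [||i ri]; last by have [_ _ _] := fusion_invariant i.+1; apply.
- apply: chain_limit_mem => [n|n].
    by case: (fusion_invariant n) => [[]].
  exact: (fusion_jumps n).1.
- apply: chain_limit_mem => [n|n].
    by case: (fusion_invariant n) => _ [].
  exact: (fusion_jumps n).2.
Qed.

End Fusion.

Lemma jumpy_disjoint_pair s : jumpy s -> exists y1 y2,
  [/\ X y1, X y2 & forall i, (size s <= i)%N -> ~~ (y1 i && y2 i)].
Proof.
move=> sj; have /choice[ext ext_jumps] : forall p : seq bool * nat,
    exists t, jumpy p.1 -> jumpy t /\ jumps p.1 t p.2.
  move=> [s' b] /=; have [s'j|ns'j] := pselect (jumpy s'); last first.
    by exists [::] => /ns'j.
  by have [t tj s't] := jumpy_jumps b s'j; exists t.
apply: (@fusion_limits (fun s b => ext (s, b))) sj.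
by move=> s' b /(ext_jumps (s', b)).
Qed.

End ClosedFamily.

Theorem lemma5p4 (X : set cantor_space) :
  closed_in_omega_omega X ->
  (forall x y, X x -> X y -> infinite_subset (setI_nat x y)) ->
  sigma_compact X.
Proof.
move=> [_ [C [closedC ->]]] meet_infinite; apply: contrapT => not_sc.
have nil_bad : bad C [::] by rewrite /bad cylinder_nil setIT.
have [rho _ /(jumpy_disjoint_pair closedC)[y1 [y2 [Xy1 Xy2 disj]]]] :=
  bad_has_jumpy_extension closedC nil_bad.
have [i [ri /andP[y1i y2i]]] := meet_infinite y1 y2 Xy1 Xy2 (size rho).
by have := disj i ri; rewrite y1i y2i.
Qed.
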